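(* There is a constant $K_0>1$ such that for every fixed $K\ge K_0$ there is a constant $a=a(K)>0$ with the following property: for all $0<r\le\sqrt2$, setting $d=K\max(r,1/\sqrt2)$, we have $A(d,r)\ge a\,r^5$.
   Context: $B(z,\rho)$ denotes the closed Euclidean ball in $\mathbb{R}^2$. For $x,y\in\mathbb{R}^2$ and $r>0$, $W(x,y;r):=\{z\in\mathbb{R}^2: B(z,r)\supseteq B(x,r)\cap B(y,\|x-y\|)\}$. Its area depends only on $\|x-y\|$ and $r$; $A(d,r)$ denotes the area of $W(x,y;r)$ for any $x,y$ with $\|x-y\|=d$. *)

From Stdlib Require Import Reals Lra List ZArith.
Open Scope R_scope.

Definition pt := (R * R)%type.

Definition dist2 (p q : pt) : R :=
  sqrt ((fst p - fst q)^2 + (snd p - snd q)^2).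

Definition ball (z : pt) (rho : R) (p : pt) : Prop := dist2 p z <= rho.

Definition W (x y : pt) (r : R) (z : pt) : Prop :=
  forall p : pt, ball x r p -> ball y (dist2 x y) p -> ball z r p.

(* Area: inner Jordan content via closed dyadic grid squares.
   square n (i,j) = [i/2^n,(i+1)/2^n] x [j/2^n,(j+1)/2^n]. *)
Definition square (n : nat) (ij : Z * Z) (p : pt) : Prop :=
  IZR (fst ij) / 2^n <= fst p <= (IZR (fst ij) + 1) / 2^n /\
  IZR (snd ij) / 2^n <= snd p <= (IZR (snd ij) + 1) / 2^n.

Definition inner_approx (S : pt -> Prop) (v : R) : Prop :=
  exists (n : nat) (l : list (Z * Z)),
    NoDup l /\
    Forall (fun ij => forall p : pt, square n ij p -> S p) l /\
    v = INR (length l) / 4^n.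

(* L is the area of S (for S bounded, the least upper bound of the inner
   approximations; equals Lebesgue measure for Jordan-measurable S, in
   particular for compact convex sets such as W(x,y;r)). *)
Definition is_area (S : pt -> Prop) (L : R) : Prop := is_lub (inner_approx S) L.

From Stdlib Require Import Reals Lra List.
From Stdlib Require Import ZArith FinFun Lia Psatz.
Open Scope R_scope.

(* When d >= 2r, every point of the lens B(x,r) ∩ B(y,d) is within
   r - rho of the axis points x + s(y - x) with s ∈ [r^2/(4d^2), 3r^2/(4d^2)],
   where rho = 3r^3/(32d^2) (lens_near_axis).  So W contains the disk of radius
   rho around each of these points (axis_disk_in_W), and a string of
   M ~ 8d/(3r) of them with centres 2 rho apart fits on that stretch.

   On the
   grid of side 2^-n with 2 <= rho 2^n < 4, the cell of each centre lies inside
   its disk and distinct centres have distinct cells (disks_inner_approx), so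
   the area is at least M rho^2/16 >= 3 r^5/(4096 d^3) (W_inner_approx).

   Finally, for K >= 2 and r <= sqrt 2, d = K max(r, 1/sqrt 2) satisfies
   d >= 2r and d^3 <= 3K^3, which gives the theorem with K0 = 2 and
   a = 1/(4096 K^3). *)

(* Squared Euclidean distance: all geometric estimates are polynomial in it. *)
Definition sqd (p q : pt) : R := (fst p - fst q)^2 + (snd p - snd q)^2.

Lemma sqd_nonneg p q : 0 <= sqd p q.
Proof. unfold sqd; apply Rplus_le_le_0_compat; apply pow2_ge_0. Qed.

Lemma sqd_sym p q : sqd p q = sqd q p.
Proof. unfold sqd; ring. Qed.

Lemma dist2_sq p q : dist2 p q ^ 2 = sqd p q.
Proof. apply pow2_sqrt, sqd_nonneg. Qed.

Lemma dist2_nonneg p q : 0 <= dist2 p q.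
Proof. apply sqrt_pos. Qed.

Lemma ball_sqd z rho p : 0 <= rho -> (ball z rho p <-> sqd p z <= rho^2).
Proof.
  intros Hrho. unfold ball. rewrite <- dist2_sq. pose proof (dist2_nonneg p z).
  split; intros Hle; [nra|].
  destruct (Rle_lt_dec (dist2 p z) rho); [assumption|nra].
Qed.

Definition along (x y : pt) (s : R) : pt :=
  (fst x + s * (fst y - fst x), snd x + s * (snd y - snd x)).

Lemma sqd_along x y s s' :
  sqd (along x y s) (along x y s') = (s - s')^2 * sqd y x.
Proof. unfold sqd, along; simpl; ring. Qed.

(* Triangle inequality in squared form: if |p - c| <= r - rho and
   |w - c| <= rho, then |p - w| <= r. *)
Lemma disk_shrink c p w r rho : 0 < rho < r ->
  sqd p c <= (r - rho)^2 -> sqd w c <= rho^2 -> sqd p w <= r^2.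
Proof.
  unfold sqd. destruct p as [p1 p2], c as [c1 c2], w as [w1 w2]. cbn [fst snd].
  intros [H0 H1] Ha Hb.
  set (a1 := p1 - c1) in *; set (a2 := p2 - c2) in *.
  set (b1 := c1 - w1); set (b2 := c2 - w2).
  replace (p1 - w1) with (a1 + b1) by (unfold a1, b1; ring).
  replace (p2 - w2) with (a2 + b2) by (unfold a2, b2; ring).
  replace ((w1 - c1)^2 + (w2 - c2)^2) with (b1^2 + b2^2) in Hb by (unfold b1, b2; ring).
  clearbody a1 a2 b1 b2.
  (* Cauchy-Schwarz for the cross term, scaled to avoid square roots *)
  assert (Hcross : a1*b1 + a2*b2 <= rho*(r-rho)).
  { assert (0 <= (rho*a1 - (r-rho)*b1)^2 + (rho*a2 - (r-rho)*b2)^2)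
      by (apply Rplus_le_le_0_compat; apply pow2_ge_0).
    assert (rho^2*(a1^2+a2^2) <= rho^2*(r-rho)^2) by (apply Rmult_le_compat_l; nra).
    assert ((r-rho)^2*(b1^2+b2^2) <= (r-rho)^2*rho^2) by (apply Rmult_le_compat_l; nra).
    assert (0 < 2*rho*(r-rho)) by nra.
    apply (Rmult_le_reg_l (2*rho*(r-rho))); nra. }
  nra.
Qed.

(* Key estimate (D = |y - x|^2 >= 4 r^2): every point p of the lens
   B(x,r) ∩ B(y,|x-y|) lies within r - rho of the axis points at fraction
   s ∈ [a, 3a] of the segment, where a = r^2/(4D) and rho = 3 r^3/(32 D).
   Indeed |p - (x + s(y-x))|^2 <= (1-s) r^2 + s^2 D <= r^2 - 3 a^2 D. *)
Lemma lens_near_axis x y r s p :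
  let D := sqd y x in
  0 < r -> 4 * r^2 <= D ->
  r^2 / (4*D) <= s <= 3 * r^2 / (4*D) ->
  sqd p x <= r^2 -> sqd p y <= D ->
  sqd p (along x y s) <= (r - 3 * r^3 / (32*D))^2.
Proof.
  intros D Hr HD Hs Hpx Hpy.
  assert (HD0 : 0 < D) by nra.
  set (a := r^2 / (4*D)) in Hs.
  assert (Hr2 : r^2 = 4*a*D) by (unfold a; field; lra).
  assert (Ha : 0 < a) by (unfold a; apply Rdiv_lt_0_compat; nra).
  assert (Hrho : 2 * r * (3 * r^3 / (32*D)) = 3 * a^2 * D)
    by (unfold a; field; lra).
  replace (3 * r^2 / (4*D)) with (3*a) in Hs by (unfold a; field; lra).
  assert (Hs1 : s <= 1) by nra.
  unfold D, sqd, along in *. destruct p as [p1 p2], x as [x1 x2], y as [y1 y2].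
  cbn [fst snd] in *.
  set (q1 := p1 - x1) in *; set (q2 := p2 - x2) in *.
  set (e1 := y1 - x1) in *; set (e2 := y2 - x2) in *.
  replace (p1 - (x1 + s * e1)) with (q1 - s * e1) by (unfold q1; ring).
  replace (p2 - (x2 + s * e2)) with (q2 - s * e2) by (unfold q2; ring).
  replace ((p1 - y1)^2 + (p2 - y2)^2) with ((q1 - e1)^2 + (q2 - e2)^2) in Hpy
    by (unfold q1, q2, e1, e2; ring).
  clearbody q1 q2 e1 e2.
  (* the lens condition |q - e| <= |e| means |q|^2 <= 2 q.e *)
  assert (Hdot : q1^2 + q2^2 <= 2 * (q1*e1 + q2*e2)) by nra.
  assert (Hmid : (q1 - s*e1)^2 + (q2 - s*e2)^2 <= (1 - s) * r^2 + s^2 * (e1^2 + e2^2)) by nra.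
  assert (Hquad : (s - a) * (s - 3*a) <= 0) by nra.
  nra.
Qed.

Lemma axis_disk_in_W x y r s w :
  let D := sqd y x in
  0 < r -> 4 * r^2 <= D ->
  r^2 / (4*D) <= s <= 3 * r^2 / (4*D) ->
  sqd w (along x y s) <= (3 * r^3 / (32*D))^2 ->
  W x y r w.
Proof.
  intros D Hr HD Hs Hw p Hpx Hpy.
  assert (HD0 : 0 < D) by nra.
  assert (Hr3 : 0 < r^3) by (apply pow_lt; lra).
  assert (Hrho : 0 < 3 * r^3 / (32*D) < r).
  { split; [apply Rdiv_lt_0_compat; lra|].
    apply (Rmult_lt_reg_r (32*D)); [lra|].
    replace (3 * r^3 / (32*D) * (32*D)) with (3 * r^3) by (field; lra).
    assert (r * (4 * r^2) <= r * D) by (apply Rmult_le_compat_l; lra). nra. }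
  apply ball_sqd in Hpx; [|lra].
  apply ball_sqd in Hpy; [|apply dist2_nonneg].
  rewrite dist2_sq, (sqd_sym x y) in Hpy.
  apply ball_sqd; [lra|].
  apply (disk_shrink (along x y s) p w r (3 * r^3 / (32*D))); [exact Hrho| |exact Hw].
  exact (lens_near_axis x y r s p Hr HD Hs Hpx Hpy).
Qed.

Lemma dyadic_scale u b : 0 < u <= b -> exists n : nat, b <= u * 2^n < 2 * b.
Proof.
  intros Hu.
  destruct (Pow_x_infinity 2 ltac:(rewrite Rabs_pos_eq; lra) (b / u)) as [N HN].
  specialize (HN N (Nat.le_refl N)).
  rewrite Rabs_pos_eq in HN by (apply pow_le; lra).
  assert (Hreach : b <= u * 2^N).
  { apply Rge_le, (Rmult_le_compat_l u) in HN; [|lra].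
    replace (u * (b / u)) with b in HN by (field; lra). lra. }
  clear HN. induction N as [|N IH].
  - exists 0%nat. simpl in *. lra.
  - destruct (Rle_lt_dec b (u * 2^N)) as [Hle|Hlt]; [exact (IH Hle)|].
    exists (S N). simpl in *. lra.
Qed.

Definition cell (n : nat) (p : pt) : Z * Z :=
  (Int_part (fst p * 2^n), Int_part (snd p * 2^n)).

Lemma four_pow n : 4^n = (2^n)^2.
Proof. replace 4 with (2*2) by lra. rewrite Rpow_mult_distr. ring. Qed.

Lemma coord_in_cell u w P : 0 < P ->
  IZR (Int_part (u * P)) / P <= w <= (IZR (Int_part (u * P)) + 1) / P ->
  (w - u)^2 * P^2 <= 1.
Proof.
  intros HP [Hlo Hhi]. destruct (base_Int_part (u * P)) as [Hi1 Hi2].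
  apply (Rmult_le_compat_r P) in Hlo, Hhi; try lra.
  replace (IZR (Int_part (u * P)) / P * P) with (IZR (Int_part (u * P))) in Hlo
    by (field; lra).
  replace ((IZR (Int_part (u * P)) + 1) / P * P) with (IZR (Int_part (u * P)) + 1) in Hhi
    by (field; lra).
  replace ((w - u)^2 * P^2) with ((w * P - u * P)^2) by ring. nra.
Qed.

Lemma same_int_part u v : Int_part u = Int_part v -> (u - v)^2 < 1.
Proof.
  intros H. pose proof (base_Int_part u). pose proof (base_Int_part v).
  rewrite H in *. nra.
Qed.

Lemma square_of_cell n p q : square n (cell n p) q -> sqd q p * 4^n <= 2.
Proof.
  unfold square, cell, sqd. cbn [fst snd]. intros [H1 H2].
  pose proof (pow_lt 2 n ltac:(lra)) as HP.
  pose proof (coord_in_cell _ _ _ HP H1). pose proof (coord_in_cell _ _ _ HP H2).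
  rewrite four_pow. nra.
Qed.

Lemma same_cell n p q : cell n p = cell n q -> sqd p q * 4^n < 2.
Proof.
  unfold cell, sqd. intros Heq. injection Heq as E1 E2.
  apply same_int_part in E1, E2. rewrite four_pow. nra.
Qed.

(* Packing: if S contains M disks of radius rho <= 2 whose centres are
   pairwise at distance >= rho, then S has an inner dyadic approximation of
   area at least M rho^2 / 16.  Take the grid of side 2^-n with
   2 <= rho 2^n < 4: the cell of each centre lies inside its disk, and
   distinct centres have distinct cells. *)
Lemma disks_inner_approx (S : pt -> Prop) (c : nat -> pt) (rho : R) (M : nat) :
  0 < rho <= 2 ->
  (forall k, (k < M)%nat -> forall w, sqd w (c k) <= rho^2 -> S w) ->
  (forall k l, (k < M)%nat -> (l < M)%nat -> k <> l -> rho^2 <= sqd (c k) (c l)) ->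
  exists v, inner_approx S v /\ INR M * rho^2 / 16 <= v.
Proof.
  intros Hrho Hdisk Hsep.
  destruct (dyadic_scale rho 2 Hrho) as [n Hn].
  assert (Hfine : 4 <= rho^2 * 4^n < 16).
  { rewrite four_pow. replace (rho^2 * (2^n)^2) with ((rho * 2^n)^2) by ring. nra. }
  assert (H4 : 0 < 4^n) by (apply pow_lt; lra).
  exists (INR M / 4^n). split.
  - exists n, (map (fun k => cell n (c k)) (seq 0 M)). split; [|split].
    + apply Injective_map_NoDup_in; [|apply seq_NoDup].
      intros k l Hk Hl Hkl. apply in_seq in Hk, Hl.
      destruct (Nat.eq_dec k l) as [|Hne]; [assumption|exfalso].
      pose proof (same_cell n _ _ Hkl).
      pose proof (Hsep k l ltac:(lia) ltac:(lia) Hne). nra.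
    + apply Forall_forall. intros ij Hij.
      apply in_map_iff in Hij. destruct Hij as [k [<- Hk]]. apply in_seq in Hk.
      intros q Hq. apply (Hdisk k ltac:(lia)).
      pose proof (square_of_cell n _ _ Hq). pose proof (sqd_nonneg q (c k)). nra.
    + rewrite length_map, length_seq. reflexivity.
  - pose proof (pos_INR M).
    apply (Rmult_le_reg_r (16 * 4^n)); [lra|].
    replace (INR M / 4^n * (16 * 4^n)) with (16 * INR M) by (field; lra). nra.
Qed.

Lemma nat_floor X : 0 <= X -> exists M : nat, X - 1 < INR M <= X.
Proof.
  intros HX. destruct (base_Int_part X) as [H1 H2].
  assert (Hpos : (-1 < Int_part X)%Z) by (apply lt_IZR; lra).
  exists (Z.to_nat (Int_part X)).
  rewrite INR_IZR_INZ, Z2Nat.id by lia. lra.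
Qed.

(* Area bound for W(x,y;r) when d = |x - y| >= 2r: the disks of radius
   rho = 3 r^3/(32 d^2) centred at the axis points at distance
   r^2/(4d) + 2 rho k from x, k < M ~ 8d/(3r), are pairwise separated and lie
   in W, so the packing lemma gives area >= M rho^2/16 >= 3 r^5/(4096 d^3). *)
Lemma W_inner_approx x y r : 0 < r <= 2 -> 2 * r <= dist2 x y ->
  exists v, inner_approx (W x y r) v /\ 3 * r^5 / (4096 * dist2 x y ^ 3) <= v.
Proof.
  intros Hr Hd. set (d := dist2 x y) in *.
  assert (Hd0 : 0 < d) by lra.
  assert (HD : sqd y x = d^2) by (unfold d; rewrite dist2_sq; apply sqd_sym).
  assert (H4r : 4 * r^2 <= sqd y x) by (rewrite HD; nra).
  set (rho := 3 * r^3 / (32 * d^2)).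
  assert (Hr3 : 0 < r^3) by (apply pow_lt; lra).
  assert (Hrho : 0 < rho <= 2).
  { unfold rho. split; [apply Rdiv_lt_0_compat; nra|].
    apply (Rmult_le_reg_r (32 * d^2)); [nra|].
    replace (3 * r^3 / (32 * d^2) * (32 * d^2)) with (3 * r^3) by (field; lra).
    assert (r^3 <= 2 * r^2) by (replace (r^3) with (r * r^2) by ring; nra). nra. }
  set (X := 8 * d / (3 * r)).
  assert (HX : 16/3 <= X).
  { unfold X. apply (Rmult_le_reg_r (3 * r)); [lra|].
    replace (8 * d / (3 * r) * (3 * r)) with (8 * d) by (field; lra). lra. }
  destruct (nat_floor X ltac:(lra)) as [M HM].
  set (c := fun k : nat => along x y (r^2 / (4 * d^2) + 2 * rho / d * INR k)).
  destruct (disks_inner_approx (W x y r) c rho M Hrho) as [v [Hv HvM]].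
  - intros k Hk w Hw.
    apply (axis_disk_in_W x y r (r^2 / (4 * d^2) + 2 * rho / d * INR k) w (proj1 Hr) H4r);
      rewrite HD.
    + pose proof (pos_INR k).
      assert (HkX : INR k <= X) by (apply Rle_trans with (INR M); [apply le_INR; lia|lra]).
      assert (Hstep : 2 * rho / d * X = r^2 / (2 * d^2)) by (unfold rho, X; field; lra).
      assert (0 <= 2 * rho / d) by (apply Rlt_le, Rdiv_lt_0_compat; lra).
      assert (2 * rho / d * INR k <= 2 * rho / d * X) by (apply Rmult_le_compat_l; lra).
      assert (r^2 / (2 * d^2) = 3 * r^2 / (4 * d^2) - r^2 / (4 * d^2)) by (field; lra).
      nra.
    + exact Hw.
  - intros k l _ _ Hkl. unfold c. rewrite sqd_along, HD.
    assert (Hkl1 : 1 <= (INR k - INR l)^2).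
    { destruct (Nat.lt_gt_cases k l) as [[h|h] _]; try exact Hkl;
        apply le_INR in h; rewrite S_INR in h; nra. }
    replace ((r^2 / (4 * d^2) + 2 * rho / d * INR k - (r^2 / (4 * d^2) + 2 * rho / d * INR l))^2 * d^2)
      with (4 * rho^2 * (INR k - INR l)^2) by (field; lra).
    nra.
  - exists v. split; [exact Hv|].
    assert (Hval : rho^2 * (X / 2) / 16 = 3 * r^5 / (4096 * d^3)) by (unfold rho, X; field; lra).
    rewrite <- Hval.
    apply Rle_trans with (INR M * rho^2 / 16); [|exact HvM].
    assert (0 < rho^2) by nra. nra.
Qed.

Lemma separation_bounds K r : 2 <= K -> 0 < r <= sqrt 2 ->
  let d := K * Rmax r (1 / sqrt 2) in 2 * r <= d /\ d^3 <= 3 * K^3.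
Proof.
  intros HK Hr d.
  assert (Hs2 : 0 < sqrt 2) by (apply sqrt_lt_R0; lra).
  assert (Hss : sqrt 2 * sqrt 2 = 2) by (apply sqrt_sqrt; lra).
  pose proof (Rmax_l r (1 / sqrt 2)) as Hm1.
  assert (Hm2 : Rmax r (1 / sqrt 2) <= sqrt 2).
  { apply Rmax_lub; [lra|]. apply (Rmult_le_reg_r (sqrt 2)); [lra|].
    replace (1 / sqrt 2 * sqrt 2) with 1 by (field; lra). lra. }
  set (m := Rmax r (1 / sqrt 2)) in *.
  split; unfold d.
  - assert (0 <= (K - 2) * m) by (apply Rmult_le_pos; lra). nra.
  - assert (Hmm : m * m <= 2) by nra.
    assert (Hm3 : m^3 <= sqrt 2 * 2).
    { replace (m^3) with (m * (m * m)) by ring. apply Rmult_le_compat; nra. }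
    assert (Hs32 : sqrt 2 <= 3/2) by nra.
    assert (0 < K^3) by (apply pow_lt; lra).
    replace ((K * m)^3) with (K^3 * m^3) by ring. nra.
Qed.

Theorem mainTheorem11 :
  exists K0 : R, K0 > 1 /\
  forall K : R, K >= K0 ->
  exists a : R, a > 0 /\
  forall r : R, 0 < r -> r <= sqrt 2 ->
  forall x y : pt, dist2 x y = K * Rmax r (1 / sqrt 2) ->
  forall L : R, is_area (W x y r) L -> L >= a * r ^ 5.
Proof.
  exists 2. split; [lra|]. intros K HK.
  assert (HK3 : 0 < K^3) by (apply pow_lt; lra).
  exists (1 / (4096 * K^3)). split; [apply Rdiv_lt_0_compat; lra|].
  intros r Hr Hr2 x y Hd L [HLub _].
  destruct (separation_bounds K r ltac:(lra) (conj Hr Hr2)) as [Hsep Hd3].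
  rewrite <- Hd in Hsep, Hd3.
  assert (Hr2' : r <= 2) by (pose proof (sqrt_sqrt 2 ltac:(lra)); pose proof (sqrt_pos 2); nra).
  destruct (W_inner_approx x y r (conj Hr Hr2') Hsep) as [v [Hv Hbound]].
  apply Rle_ge, Rle_trans with v; [|exact (HLub v Hv)].
  apply Rle_trans with (3 * r^5 / (4096 * dist2 x y ^ 3)); [|exact Hbound].
  assert (Hr5 : 0 < r^5) by (apply pow_lt; lra).
  assert (Hd0 : 0 < dist2 x y ^ 3) by (apply pow_lt; lra).
  replace (3 * r^5 / (4096 * dist2 x y ^ 3)) with (3 / (4096 * dist2 x y ^ 3) * r^5)
    by (field; lra).
  apply Rmult_le_compat_r; [lra|].
  replace (1 / (4096 * K^3)) with (3 / (3 * 4096 * K^3)) by (field; lra).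
  unfold Rdiv. apply Rmult_le_compat_l; [lra|]. apply Rinv_le_contravar; lra.
Qed.
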